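(* For real $p\neq 0$, the inequality $\left( \frac{\sinh x}{x}\right) ^{2p}+\left( \frac{\tanh x}{x}\right) ^{p}>2$ holds for all $x\in(0,\infty)$ if and only if $p>0$ or $p\leq -3/5$. *)

From Stdlib Require Import Reals.
Open Scope R_scope.

From Stdlib Require Import Reals Lra Lia List Factorial.
From Coquelicot Require Import Coquelicot.
Import ListNotations.
Open Scope R_scope.

(* Write s = sinh x / x and c = cosh x, so that tanh x / x = s / c.

   For p > 0 the sum s^(2p) + (s/c)^p is at least 2 (s^3/c)^(p/2) by AM-GM, and s^3 > c
   because 3 ln s - ln c is increasing and tends to 0 at 0+.

   For p = -q < 0 put u = s^q >= 1; the sum is 1/u^2 + c^q/u, which exceeds 2 iff
   c^q > 2u - 1/u, i.e. iff [margin q x] is positive.  [margin q] tends to 0 at 0+ and its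
   derivative has the sign of 2 u^2 F3 - F4, where F3 = sinh x cosh x - x and
   F4 = x cosh 2x - sinh x cosh x.  Now F4/(2 F3) = 1 + x^2/5 + O(x^4) while
   u^2 = s^(2q) = 1 + q x^2/3 + O(x^4), whence the threshold q = 3/5: for q >= 3/5 a second
   monotonicity argument gives F4/(2 F3) < s^(6/5) <= u^2 on all of (0, oo), while for
   q < 3/5 the reverse inequality holds near 0, where [margin q] is therefore negative.

   Every elementary inequality between x, sinh x and cosh x used along the way is proved by
   expanding the difference into a power series with nonnegative coefficients. *)

(** * Exponential polynomials *)

(* [(v, j, k)] stands for the term v x^j e^(k x). *)
Fixpoint exp_poly (l : list (R * nat * R)) (x : R) : R :=
  match l with
  | [] => 0
  | (v, j, k) :: l => v * x ^ j * exp (k * x) + exp_poly l x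
  end.

Definition exp_mono_coef (j : nat) (k : R) (n : nat) : R :=
  if Nat.leb j n then k ^ (n - j) / INR (fact (n - j)) else 0.

Fixpoint exp_poly_coef (l : list (R * nat * R)) (n : nat) : R :=
  match l with
  | [] => 0
  | (v, j, k) :: l => v * exp_mono_coef j k n + exp_poly_coef l n
  end.

Lemma PS_incr_n_eq (a : nat -> R) j n :
  PS_incr_n a j n = if Nat.leb j n then a (n - j)%nat else 0.
Proof.
  revert n; induction j as [|j IH]; intros [|n]; simpl; try reflexivity.
  apply IH.
Qed.

Lemma is_pseries_exp_mono j k x :
  is_pseries (exp_mono_coef j k) x (x ^ j * exp (k * x)).
Proof.
  assert (Hexp : is_pseries (fun n => k ^ n / INR (fact n)) x (exp (k * x))).
  { apply is_pseries_R. generalize (is_exp_Reals (k * x)); intro H.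
    apply is_pseries_R in H. eapply is_series_ext; [|exact H].
    intro n; simpl. rewrite Rpow_mult_distr. unfold Rdiv. ring. }
  eapply is_pseries_ext; [|exact (is_pseries_incr_n _ j _ _ Hexp)].
  intro n. now rewrite PS_incr_n_eq.
Qed.

Lemma is_pseries_exp_poly l x : is_pseries (exp_poly_coef l) x (exp_poly l x).
Proof.
  induction l as [|[[v j] k] l IH]; simpl.
  - generalize (is_pseries_scal 0 _ _ _ (Rmult_comm _ _) (is_pseries_exp_mono 0 0 x)).
    unfold scal; simpl; unfold mult; simpl. rewrite Rmult_0_l.
    apply is_pseries_ext. intro n. unfold PS_scal, scal; simpl. unfold mult; simpl. ring.
  - generalize (is_pseries_plus _ _ _ _ _
      (is_pseries_scal v _ _ _ (Rmult_comm _ _) (is_pseries_exp_mono j k x)) IH).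
    unfold plus, scal; simpl; unfold mult; simpl. rewrite <- Rmult_assoc.
    apply is_pseries_ext. reflexivity.
Qed.

Lemma is_pseries_pos (a : nat -> R) x l m :
  is_pseries a x l -> 0 < x -> (forall n, 0 <= a n) -> 0 < a m -> 0 < l.
Proof.
  intros Hl Hx Ha Hm. apply is_pseries_R in Hl.
  set (t n := a n * x ^ n).
  assert (Ht : forall n, 0 <= t n) by (intro n; apply Rmult_le_pos, pow_le; auto; lra).
  assert (Htm : 0 < t m) by (apply Rmult_lt_0_compat, pow_lt; auto).
  assert (Hnn : forall n, 0 <= sum_n t n).
  { induction n as [|n IH]; [rewrite sum_O; apply Ht|].
    rewrite sum_Sn. unfold plus; simpl. specialize (Ht (S n)). lra. }
  assert (Hsum : 0 < sum_n t m).
  { destruct m as [|m]; [now rewrite sum_O|].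
    rewrite sum_Sn. unfold plus; simpl. specialize (Hnn m). lra. }
  apply (Rlt_le_trans _ _ _ Hsum), (is_lim_seq_incr_compare _ _ Hl).
  intro n. rewrite sum_Sn. unfold plus; simpl.
  specialize (Ht (S n)). unfold t in Ht. simpl in Ht. lra.
Qed.

Lemma exp_poly_pos l N (num : nat -> R) p0 x :
  (forall n, (n < N)%nat -> 0 <= exp_poly_coef l n) ->
  (forall p, exp_poly_coef l (N + p) * INR (fact (N + p)) = num p) ->
  0 < num p0 -> 0 < x -> (forall p, 0 <= num p) -> 0 < exp_poly l x.
Proof.
  intros Hlow Hnum Hp0 Hx Hnn.
  assert (Hcoef : forall p, exp_poly_coef l (N + p) = num p / INR (fact (N + p))).
  { intro p. rewrite <- Hnum. field. apply INR_fact_neq_0. }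
  apply (is_pseries_pos _ x _ (N + p0) (is_pseries_exp_poly l x) Hx).
  - intro n. destruct (Nat.lt_ge_cases n N) as [Hn|Hn]; [now apply Hlow|].
    replace n with (N + (n - N))%nat by lia. rewrite Hcoef.
    apply Rle_mult_inv_pos; [apply Hnn | apply INR_fact_lt_0].
  - rewrite Hcoef. apply Rdiv_lt_0_compat; [exact Hp0 | apply INR_fact_lt_0].
Qed.

(* The series below are odd (or, once, even) functions, so half of their Taylor coefficients
   vanish; writing the coefficients with this factor lets [field] check them without a
   parity case split. *)
Definition odd_indicator (p : nat) : R := (1 - (-1) ^ p) / 2.

Lemma odd_indicator_mul_nonneg p c :
  (Nat.Odd p -> 0 <= c) -> 0 <= odd_indicator p * c.
Proof.
  unfold odd_indicator. intro Hc.
  destruct (Nat.Even_or_Odd p) as [[m ->]|[m Hm]].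
  - rewrite pow_1_even. replace ((1 - 1) / 2) with 0 by field. lra.
  - assert (H := Hc (ex_intro _ m Hm)). subst p. rewrite Nat.add_1_r, pow_1_odd in *. lra.
Qed.

Lemma odd_indicator_le_1 p : odd_indicator p <= 1.
Proof.
  unfold odd_indicator. destruct (Nat.Even_or_Odd p) as [[m ->]|[m ->]].
  - rewrite pow_1_even. lra.
  - rewrite Nat.add_1_r, pow_1_odd. lra.
Qed.

Lemma odd_INR_ge_1 p : Nat.Odd p -> 1 <= INR p.
Proof. intros [m ->]. rewrite plus_INR, mult_INR. simpl. generalize (pos_INR m). lra. Qed.

Lemma INR_fact_S n : INR (fact (S n)) = (INR n + 1) * INR (fact n).
Proof. rewrite fact_simpl, mult_INR, S_INR. ring. Qed.

Lemma pow_IZR_neg (q : positive) n : IZR (Zneg q) ^ n = (-1) ^ n * IZR (Zpos q) ^ n.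
Proof. rewrite IZR_NEG, <- Rpow_mult_distr. f_equal. ring. Qed.

Lemma exp_mul_INR n x : exp (INR n * x) = exp x ^ n.
Proof.
  induction n as [|n IH]; [simpl; now rewrite Rmult_0_l, exp_0|].
  rewrite S_INR, Rmult_plus_distr_r, Rmult_1_l, exp_plus, IH. simpl. ring.
Qed.

Lemma exp_mul_IZR z x : exp (IZR z * x) = powerRZ (exp x) z.
Proof.
  destruct z as [|q|q]; simpl.
  - now rewrite Rmult_0_l, exp_0.
  - now rewrite <- Znat.positive_nat_Z, <- INR_IZR_INZ, exp_mul_INR.
  - now rewrite IZR_NEG, <- Znat.positive_nat_Z, <- INR_IZR_INZ, Ropp_mult_distr_l_reverse,
      exp_Ropp, exp_mul_INR.
Qed.

Ltac exp_poly_eval :=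
  cbn [exp_poly]; rewrite ?exp_mul_IZR; cbn [powerRZ];
  repeat match goal with |- context [Pos.to_nat ?q] =>
    let n := eval compute in (Pos.to_nat q) in change (Pos.to_nat q) with n end;
  unfold sinh, cosh; rewrite ?exp_Ropp;
  match goal with |- context [exp ?y] => generalize (exp_pos y); intro end; field; lra.

Ltac exp_poly_coef_eval :=
  let p := fresh "p" in
  intro p; cbn [exp_poly_coef exp_mono_coef Nat.leb Nat.sub pow Nat.add];
  repeat rewrite INR_fact_S;
  repeat match goal with
  | |- context [IZR (Zneg (xO ?q)) ^ ?n] => rewrite (pow_IZR_neg (xO q) n)
  | |- context [IZR (Zneg (xI ?q)) ^ ?n] => rewrite (pow_IZR_neg (xI q) n)
  end;
  rewrite ?pow1;
  unfold odd_indicator; rewrite ?S_INR; field;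
  generalize (INR_fact_lt_0 p) (pos_INR p); intros; repeat split; lra.

Ltac exp_poly_low_coefs :=
  intros n Hn;
  repeat (destruct n as [|n];
          [unfold exp_poly_coef, exp_mono_coef; simpl; lra | apply <- Nat.succ_lt_mono in Hn]);
  lia.

(* Proves a goal [0 < e] by checking [e = exp_poly l x] and the coefficient formula
   [num]; what remains is [0 <= num p]. *)
Ltac exp_poly_positivity x l N num p0 :=
  match goal with |- 0 < ?e => replace e with (exp_poly l x) by exp_poly_eval end;
  apply (exp_poly_pos l N num p0 x);
  [exp_poly_low_coefs | exp_poly_coef_eval | unfold odd_indicator; simpl; lra | assumption
  | intro p].

(** * Inequalities between hyperbolic functions *)

(* These are (sinh 2x - 2x)/2 and (2x cosh 2x - sinh 2x)/2. *)
Definition sinh_cosh_gap (x : R) : R := sinh x * cosh x - x.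
Definition cosh2_gap (x : R) : R := x + 2 * x * sinh x ^ 2 - sinh x * cosh x.

Lemma sinh_gt_id x : 0 < x -> x < sinh x.
Proof.
  intro Hx. apply Rlt_0_minus.
  exp_poly_positivity x [(-1/2, 0%nat, -1); (1/2, 0%nat, 1); (-1, 1%nat, 0)]
    2%nat (fun p => odd_indicator p * 1) 1%nat.
  apply odd_indicator_mul_nonneg. lra.
Qed.

Lemma sinh_lt_mul_cosh x : 0 < x -> sinh x < x * cosh x.
Proof.
  intro Hx. apply Rlt_0_minus.
  exp_poly_positivity x [(1/2, 0%nat, -1); (-1/2, 0%nat, 1); (1/2, 1%nat, -1); (1/2, 1%nat, 1)]
    2%nat (fun p => odd_indicator p * (INR p + 1)) 1%nat.
  apply odd_indicator_mul_nonneg. generalize (pos_INR p). lra.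
Qed.

Lemma sinh_cosh_gap_pos x : 0 < x -> 0 < sinh_cosh_gap x.
Proof.
  intro Hx. unfold sinh_cosh_gap.
  exp_poly_positivity x [(-1/4, 0%nat, -2); (1/4, 0%nat, 2); (-1, 1%nat, 0)]
    2%nat (fun p => odd_indicator p * (2 * 2 ^ p)) 1%nat.
  apply odd_indicator_mul_nonneg. generalize (pow_lt 2 p ltac:(lra)). lra.
Qed.

Lemma cosh2_gap_pos x : 0 < x -> 0 < cosh2_gap x.
Proof.
  intro Hx. unfold cosh2_gap.
  exp_poly_positivity x [(1/4, 0%nat, -2); (-1/4, 0%nat, 2); (1/2, 1%nat, -2); (1/2, 1%nat, 2)]
    2%nat (fun p => odd_indicator p * (2 ^ p * (2 * INR p + 2))) 1%nat.
  apply odd_indicator_mul_nonneg. generalize (pow_lt 2 p ltac:(lra)) (pos_INR p). nra.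
Qed.

Lemma cosh2_gap_gt x : 0 < x -> 2 * sinh_cosh_gap x < cosh2_gap x.
Proof.
  intro Hx. apply Rlt_0_minus. unfold sinh_cosh_gap, cosh2_gap.
  exp_poly_positivity x
    [(3/4, 0%nat, -2); (-3/4, 0%nat, 2); (1/2, 1%nat, -2); (2, 1%nat, 0); (1/2, 1%nat, 2)]
    2%nat (fun p => odd_indicator p * (2 ^ p * (2 * INR p - 2))) 3%nat.
  apply odd_indicator_mul_nonneg. intro Hp.
  generalize (odd_INR_ge_1 p Hp) (pow_lt 2 p ltac:(lra)). nra.
Qed.

Lemma cosh2_gap_lt x : 0 < x -> cosh2_gap x < 2 * sinh_cosh_gap x * (1 + x ^ 2).
Proof.
  intro Hx. apply Rlt_0_minus. unfold sinh_cosh_gap, cosh2_gap.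
  exp_poly_positivity x
    [(-3/4, 0%nat, -2); (3/4, 0%nat, 2); (-1/2, 1%nat, -2); (-2, 1%nat, 0); (-1/2, 1%nat, 2);
     (-1/2, 2%nat, -2); (1/2, 2%nat, 2); (-2, 3%nat, 0)]
    4%nat (fun p => odd_indicator p * (2 ^ p * (4 * INR p ^ 2 + 20 * INR p + 40))) 1%nat.
  apply odd_indicator_mul_nonneg. generalize (pow_lt 2 p ltac:(lra)) (pos_INR p). nra.
Qed.

Lemma cosh2_gap_gt_sharp x :
  0 < x -> 2 * sinh_cosh_gap x * (1 + x ^ 2 / 5 - x ^ 4) < cosh2_gap x.
Proof.
  intro Hx. apply Rlt_0_minus. unfold sinh_cosh_gap, cosh2_gap.
  exp_poly_positivity x
    [(3/4, 0%nat, -2); (-3/4, 0%nat, 2); (1/2, 1%nat, -2); (2, 1%nat, 0); (1/2, 1%nat, 2);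
     (1/10, 2%nat, -2); (-1/10, 2%nat, 2); (2/5, 3%nat, 0); (-1/2, 4%nat, -2); (1/2, 4%nat, 2);
     (-2, 5%nat, 0)]
    6%nat (fun p => odd_indicator p * (2 ^ p *
      (4 * INR p ^ 4 + 72 * INR p ^ 3 + 2364/5 * INR p ^ 2 + 6824/5 * INR p + 1440))) 1%nat.
  apply odd_indicator_mul_nonneg. generalize (pow_lt 2 p ltac:(lra)) (pos_INR p).
  intros. apply Rmult_le_pos; [lra|]. assert (0 <= INR p ^ 3) by (apply pow_le; lra). nra.
Qed.

Lemma mul_cosh_lt_sinh x : 0 < x -> 3 * x * cosh x < (x ^ 2 + 3) * sinh x.
Proof.
  intro Hx. apply Rlt_0_minus.
  exp_poly_positivity x
    [(-3/2, 0%nat, -1); (3/2, 0%nat, 1); (-3/2, 1%nat, -1); (-3/2, 1%nat, 1);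
     (-1/2, 2%nat, -1); (1/2, 2%nat, 1)]
    3%nat (fun p => (1 - odd_indicator p) * (INR p * (INR p + 2))) 2%nat.
  apply Rmult_le_pos; [generalize (odd_indicator_le_1 p); lra | generalize (pos_INR p); nra].
Qed.

(* Zero for p = 1, 3, 5; for p >= 9 the 5^p term dominates, by Bernoulli's inequality. *)
Lemma gap_ratio_deriv_coef_nonneg p : Nat.Odd p ->
  0 <= 5 ^ p * (75/8 * INR p ^ 2 - 175/4 * INR p - 3325/16)
       + 3 ^ p * (3 * INR p ^ 3 + 315/8 * INR p ^ 2 + 699/4 * INR p + 3933/16)
       - (4 * INR p ^ 3 + 33 * INR p ^ 2 + 165/2 * INR p + 467/8).
Proof.
  intros [m ->]. destruct m as [|[|[|[|k]]]]; [simpl; lra..|].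
  replace (2 * S (S (S (S k))) + 1)%nat with (9 + 2 * k)%nat by lia.
  rewrite !pow_add, !pow_mult, plus_INR, mult_INR.
  assert (H25 := poly k 24 ltac:(lra)). replace (1 + 24) with (5 ^ 2) in H25 by ring.
  assert (H9 : 0 <= (3 ^ 2) ^ k) by (apply pow_le; lra).
  generalize (pos_INR k). simpl INR.
  set (Y := (5 ^ 2) ^ k) in *. set (Z := (3 ^ 2) ^ k) in *. set (r := INR k) in *. intro Hr.
  assert (HQ5 : 0 <= 75/8 * (9 + 2 * r) ^ 2 - 175/4 * (9 + 2 * r) - 3325/16) by nra.
  assert (HQ3 : 0 <= 3 * (9 + 2 * r) ^ 3 + 315/8 * (9 + 2 * r) ^ 2 + 699/4 * (9 + 2 * r) + 3933/16)
    by nra.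
  assert (0 <= (Y - (1 + r * 24)) * (75/8 * (9 + 2 * r) ^ 2 - 175/4 * (9 + 2 * r) - 3325/16))
    by (apply Rmult_le_pos; lra).
  assert (0 <= Z * (3 * (9 + 2 * r) ^ 3 + 315/8 * (9 + 2 * r) ^ 2 + 699/4 * (9 + 2 * r) + 3933/16))
    by (apply Rmult_le_pos; lra).
  nra.
Qed.

Lemma gap_ratio_deriv_num_pos x : 0 < x ->
  5 * x * sinh x ^ 2 * (sinh x ^ 2 * cosh x + x * sinh x - 2 * x ^ 2 * cosh x)
  < 3 * (x * cosh x - sinh x) * cosh2_gap x * sinh_cosh_gap x.
Proof.
  intro Hx. apply Rlt_0_minus. unfold sinh_cosh_gap, cosh2_gap.
  exp_poly_positivity x
    [(-3/32, 0%nat, -5); (3/32, 0%nat, -3); (3/16, 0%nat, -1); (-3/16, 0%nat, 1);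
     (-3/32, 0%nat, 3); (3/32, 0%nat, 5); (-7/16, 1%nat, -5); (3/16, 1%nat, -3);
     (1/4, 1%nat, -1); (1/4, 1%nat, 1); (3/16, 1%nat, 3); (-7/16, 1%nat, 5);
     (-3/16, 2%nat, -5); (-11/16, 2%nat, -3); (-3/2, 2%nat, -1); (3/2, 2%nat, 1);
     (11/16, 2%nat, 3); (3/16, 2%nat, 5); (1/2, 3%nat, -3); (-2, 3%nat, -1);
     (-2, 3%nat, 1); (1/2, 3%nat, 3)]
    4%nat (fun p => odd_indicator p *
      (5 ^ p * (75/8 * INR p ^ 2 - 175/4 * INR p - 3325/16)
       + 3 ^ p * (3 * INR p ^ 3 + 315/8 * INR p ^ 2 + 699/4 * INR p + 3933/16)
       - (4 * INR p ^ 3 + 33 * INR p ^ 2 + 165/2 * INR p + 467/8))) 7%nat.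
  apply odd_indicator_mul_nonneg, gap_ratio_deriv_coef_nonneg.
Qed.

Lemma ln_le_sub_1 z : 0 < z -> ln z <= z - 1.
Proof.
  intro Hz. rewrite <- (exp_ln z Hz) at 2. generalize (exp_ineq1_le (ln z)). lra.
Qed.

Lemma cosh_ge_1 x : 1 <= cosh x.
Proof.
  unfold cosh. rewrite exp_Ropp. assert (HE := exp_pos x).
  assert (0 <= (exp x - 1) ^ 2 / exp x) by (apply Rle_mult_inv_pos; [apply pow2_ge_0 | lra]).
  replace ((exp x + / exp x) / 2) with (1 + (exp x - 1) ^ 2 / exp x / 2) by (field; lra). lra.
Qed.

Lemma cosh_ge_1_add_sqr x : 0 < x -> 1 + x ^ 2 / 2 <= cosh x.
Proof.
  intro Hx.
  assert (Hhalf : cosh x = 1 + 2 * sinh (x / 2) ^ 2).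
  { unfold cosh, sinh. rewrite !exp_Ropp. replace x with (x / 2 + x / 2) at 1 2 by field.
    rewrite exp_plus. assert (HE := exp_pos (x / 2)). field. lra. }
  assert (Hs := sinh_gt_id (x / 2) ltac:(lra)). rewrite Hhalf. nra.
Qed.

Lemma exp_le_compat x y : x <= y -> exp x <= exp y.
Proof. intros [H|H]; [left; now apply exp_increasing | rewrite H; lra]. Qed.

Lemma exp_le_inv_one_sub y : y < 1 -> exp y <= / (1 - y).
Proof.
  intro Hy. rewrite <- (Rinv_inv (exp y)), <- exp_Ropp. apply Rinv_le_contravar; [lra|].
  generalize (exp_ineq1_le (- y)). lra.
Qed.

Lemma ln_two_sub_inv_bounds u : 1 <= u -> 0 <= ln (2 * u - / u) <= 3 * ln u.
Proof.
  intro Hu. assert (Hinv : / u <= 1) by (rewrite <- Rinv_1; apply Rinv_le_contravar; lra).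
  assert (Hup : 2 * u - / u <= u ^ 3).
  { apply (Rmult_le_reg_r u); [lra|].
    replace ((2 * u - / u) * u) with (2 * u ^ 2 - 1) by (field; lra).
    generalize (pow2_ge_0 (u ^ 2 - 1)). nra. }
  replace (3 * ln u) with (ln (u ^ 3)) by (rewrite ln_pow by lra; simpl; ring).
  rewrite <- ln_1. split; apply ln_le; lra.
Qed.

Lemma inv_one_sub_lt c y :
  0 <= c -> 0 < y -> y < (1 / 5 - c) / 2 -> / (1 - c * y) < 1 + y / 5 - y ^ 2.
Proof.
  intros Hc Hy Hyc. assert (Hcy : c * y < 1 / 5) by nra.
  apply (Rmult_lt_reg_l (1 - c * y)); [lra|]. rewrite Rinv_r by lra.
  assert (0 < y * (1 / 5 - c - 2 * y)) by (apply Rmult_lt_0_compat; lra).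
  assert (0 <= c * y ^ 3) by (apply Rmult_le_pos; [lra | apply pow_le; lra]).
  nra.
Qed.

Lemma exists_cosh_near_1 y eps : 0 < y -> 0 < eps -> exists t, 0 < t < y /\ cosh t - 1 < eps.
Proof.
  intros Hy He.
  destruct (derivable_continuous_pt _ _ (derivable_pt_cosh 0) eps He) as [d [Hd Hc]].
  exists (Rmin y d / 2). assert (Hm : 0 < Rmin y d) by (apply Rmin_glb_lt; lra).
  split; [split; [lra | generalize (Rmin_l y d); lra]|].
  assert (Hdist : Rabs (cosh (Rmin y d / 2) - cosh 0) < eps).
  { apply Hc. split; [split; [exact I | lra]|].
    change (Rabs (Rmin y d / 2 - 0) < d).
    rewrite Rminus_0_r, Rabs_pos_eq by lra. generalize (Rmin_r y d). lra. }
  rewrite cosh_0 in Hdist. generalize (Rle_abs (cosh (Rmin y d / 2) - 1)). lra.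
Qed.

(* The functions below involve ln (sinh t / t) and are undefined at 0; a lower bound
   vanishing at 0+ replaces the boundary value. *)
Lemma pos_of_is_derive_pos (f f' : R -> R) (d : Rbar) (C x : R) :
  0 <= C -> 0 < x -> Rbar_lt x d ->
  (forall t, 0 < t -> Rbar_lt t d -> is_derive f t (f' t)) ->
  (forall t, 0 < t -> Rbar_lt t d -> 0 < f' t) ->
  (forall t, 0 < t -> Rbar_lt t d -> - C * (cosh t - 1) <= f t) ->
  0 < f x.
Proof.
  intros HC Hx Hxd Hder Hpos Hlow.
  assert (Hinc : forall a b, 0 < a -> a < b -> Rbar_lt b d -> f a < f b).
  { intros a b Ha Hab Hbd. apply (incr_function f 0 d f'); auto. }
  set (y := x / 2).
  assert (Hyd : Rbar_lt y d) by (apply Rbar_lt_trans with x; [simpl; unfold y; lra | exact Hxd]).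
  assert (Hyx : f y < f x) by (apply Hinc; unfold y; auto; lra).
  apply Rnot_le_lt. intro Hfx.
  destruct (exists_cosh_near_1 y (- f y / (C + 1))) as [t [Ht Hct]];
    [unfold y; lra | apply Rdiv_lt_0_compat; lra|].
  assert (Htd : Rbar_lt t d) by (apply Rbar_lt_trans with y; [simpl; lra | exact Hyd]).
  assert (Hty : f t < f y) by (apply Hinc; tauto).
  assert (Hc1 := cosh_ge_1 t). specialize (Hlow t (proj1 Ht) Htd).
  assert (Hct' : (cosh t - 1) * (C + 1) < - f y).
  { apply (Rmult_lt_compat_r (C + 1)) in Hct; [|lra].
    unfold Rdiv in Hct. rewrite Rmult_assoc, Rinv_l in Hct by lra. lra. }
  nra.
Qed.

Definition lnsinc (x : R) : R := ln (sinh x / x).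

Lemma sinc_gt_1 x : 0 < x -> 1 < sinh x / x.
Proof.
  intro Hx. apply (Rmult_lt_reg_r x); [exact Hx|].
  unfold Rdiv. rewrite Rmult_assoc, Rinv_l, Rmult_1_l, Rmult_1_r by lra. now apply sinh_gt_id.
Qed.

Lemma sinc_lt_cosh x : 0 < x -> sinh x / x < cosh x.
Proof.
  intro Hx. apply (Rmult_lt_reg_r x); [exact Hx|].
  unfold Rdiv. rewrite Rmult_assoc, Rinv_l, Rmult_1_r by lra. rewrite Rmult_comm.
  now apply sinh_lt_mul_cosh.
Qed.

Lemma lnsinc_pos x : 0 < x -> 0 < lnsinc x.
Proof. intro Hx. rewrite <- ln_1. apply ln_increasing; [lra | now apply sinc_gt_1]. Qed.

Lemma lnsinc_lt x : 0 < x -> lnsinc x < cosh x - 1.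
Proof.
  intro Hx. assert (H1 := sinc_gt_1 x Hx). assert (H2 := sinc_lt_cosh x Hx).
  generalize (ln_le_sub_1 (sinh x / x) ltac:(lra)). unfold lnsinc. lra.
Qed.


(* Clears denominators treating sinh x and cosh x as atoms, so that the side conditions
   are the known positivity facts; the remaining polynomial identity needs
   cosh^2 - sinh^2 = 1 and is checked on exponentials. *)
Ltac hyperbolic_field :=
  field_simplify_eq;
  [ unfold sinh, cosh; rewrite ?exp_Ropp; field; apply Rgt_not_eq, exp_pos
  | repeat split; apply Rgt_not_eq; nra ].

Lemma is_derive_lnsinc_cube_cosh x : 0 < x ->
  is_derive (fun t => 3 * lnsinc t - ln (cosh t)) x
    ((cosh2_gap x - 2 * sinh_cosh_gap x) / (x * sinh x * cosh x)).
Proof.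
  intro Hx. assert (Hs := sinh_gt_id x Hx). assert (Hsx := sinc_gt_1 x Hx).
  assert (Hc := cosh_ge_1 x).
  unfold lnsinc, cosh2_gap, sinh_cosh_gap. auto_derive.
  - repeat split; lra.
  - hyperbolic_field.
Qed.

Lemma ln_cosh_lt_3_lnsinc x : 0 < x -> ln (cosh x) < 3 * lnsinc x.
Proof.
  intro Hx. apply Rlt_0_minus.
  eapply (pos_of_is_derive_pos (fun t => 3 * lnsinc t - ln (cosh t)) _ p_infty 1 x);
    [lra | exact Hx | exact I | intros t Ht _ ..].
  - now apply is_derive_lnsinc_cube_cosh.
  - apply Rdiv_lt_0_compat; [generalize (cosh2_gap_gt t Ht); lra|].
    assert (Hs := sinh_gt_id t Ht). assert (Hc := cosh_ge_1 t).
    apply Rmult_lt_0_compat; [apply Rmult_lt_0_compat|]; lra.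
  - generalize (lnsinc_pos t Ht) (ln_le_sub_1 (cosh t) ltac:(generalize (cosh_ge_1 t); lra)). lra.
Qed.

Lemma is_derive_sqr_sub_lnsinc x : 0 < x ->
  is_derive (fun t => t ^ 2 / 6 - lnsinc t) x
    (((x ^ 2 + 3) * sinh x - 3 * x * cosh x) / (3 * x * sinh x)).
Proof.
  intro Hx. assert (Hs := sinh_gt_id x Hx). assert (Hsx := sinc_gt_1 x Hx).
  unfold lnsinc. auto_derive.
  - repeat split; lra.
  - hyperbolic_field.
Qed.

Lemma lnsinc_lt_sqr x : 0 < x -> lnsinc x < x ^ 2 / 6.
Proof.
  intro Hx. apply Rlt_0_minus.
  eapply (pos_of_is_derive_pos (fun t => t ^ 2 / 6 - lnsinc t) _ p_infty 1 x);
    [lra | exact Hx | exact I | intros t Ht _ ..].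
  - now apply is_derive_sqr_sub_lnsinc.
  - apply Rdiv_lt_0_compat; [generalize (mul_cosh_lt_sinh t Ht); lra|].
    generalize (sinh_gt_id t Ht). intro. apply Rmult_lt_0_compat; lra.
  - generalize (lnsinc_lt t Ht) (pow2_ge_0 t). lra.
Qed.

Lemma is_derive_lnsinc_sub_ln_gap_ratio x : 0 < x ->
  is_derive (fun t => 6 / 5 * lnsinc t - ln (cosh2_gap t / (2 * sinh_cosh_gap t))) x
    (2 * (3 * (x * cosh x - sinh x) * cosh2_gap x * sinh_cosh_gap x
          - 5 * x * sinh x ^ 2 * (sinh x ^ 2 * cosh x + x * sinh x - 2 * x ^ 2 * cosh x))
     / (5 * x * sinh x * cosh2_gap x * sinh_cosh_gap x)).
Proof.
  intro Hx. assert (Hs := sinh_gt_id x Hx). assert (Hsx := sinc_gt_1 x Hx).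
  assert (H3 := sinh_cosh_gap_pos x Hx). assert (H4 := cosh2_gap_pos x Hx).
  assert (Hc := cosh_ge_1 x).
  unfold lnsinc, cosh2_gap, sinh_cosh_gap in *. auto_derive.
  - repeat split; try lra.
    apply Rmult_lt_0_compat; [simpl in H4; lra | apply Rinv_0_lt_compat; lra].
  - hyperbolic_field.
Qed.

Lemma cosh2_gap_lt_exp_lnsinc x : 0 < x ->
  cosh2_gap x < 2 * sinh_cosh_gap x * exp (6 / 5 * lnsinc x).
Proof.
  intro Hx. assert (H3 := sinh_cosh_gap_pos x Hx). assert (H4 := cosh2_gap_pos x Hx).
  assert (Hr : 0 < cosh2_gap x / (2 * sinh_cosh_gap x)) by (apply Rdiv_lt_0_compat; lra).
  enough (H : ln (cosh2_gap x / (2 * sinh_cosh_gap x)) < 6 / 5 * lnsinc x).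
  { apply exp_increasing in H. rewrite exp_ln in H by exact Hr.
    apply (Rmult_lt_compat_l (2 * sinh_cosh_gap x)) in H; [|lra].
    unfold Rdiv in H. rewrite <- Rmult_assoc, (Rmult_comm _ (cosh2_gap x)), Rmult_assoc,
      Rinv_r, Rmult_1_r in H by lra. exact H. }
  apply Rlt_0_minus.
  eapply (pos_of_is_derive_pos
    (fun t => 6 / 5 * lnsinc t - ln (cosh2_gap t / (2 * sinh_cosh_gap t))) _ p_infty 2 x);
    [lra | exact Hx | exact I | intros t Ht _ ..].
  - now apply is_derive_lnsinc_sub_ln_gap_ratio.
  - assert (HG := gap_ratio_deriv_num_pos t Ht). assert (Hs := sinh_gt_id t Ht).
    assert (H3' := sinh_cosh_gap_pos t Ht). assert (H4' := cosh2_gap_pos t Ht).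
    apply Rdiv_lt_0_compat; [lra|].
    do 2 (apply Rmult_lt_0_compat; [|lra]). apply Rmult_lt_0_compat; lra.
  - assert (H3' := sinh_cosh_gap_pos t Ht). assert (H4' := cosh2_gap_pos t Ht).
    assert (Hrt : cosh2_gap t / (2 * sinh_cosh_gap t) < 1 + t ^ 2).
    { apply (Rmult_lt_reg_r (2 * sinh_cosh_gap t)); [lra|].
      unfold Rdiv. rewrite Rmult_assoc, Rinv_l by lra. generalize (cosh2_gap_lt t Ht). lra. }
    generalize (ln_le_sub_1 _ (Rdiv_lt_0_compat (cosh2_gap t) (2 * sinh_cosh_gap t) H4' ltac:(lra)))
      (lnsinc_pos t Ht) (cosh_ge_1_add_sqr t Ht). lra.
Qed.

(** * Negative exponents *)

Lemma Rpower_sinc_ge_1 q x : 0 <= q -> 0 < x -> 1 <= Rpower (sinh x / x) q.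
Proof.
  intros Hq Hx. unfold Rpower. rewrite <- exp_0.
  assert (Ha := lnsinc_pos x Hx). unfold lnsinc in Ha.
  destruct (Rle_lt_or_eq_dec 0 q Hq) as [Hq'|<-].
  - left. apply exp_increasing. nra.
  - rewrite Rmult_0_l. lra.
Qed.

(* With u = (sinh x / x)^q, the sum for the exponent -q exceeds 2
   iff cosh x ^ q > 2u - 1/u. *)
Definition margin (q x : R) : R :=
  q * ln (cosh x) - ln (2 * Rpower (sinh x / x) q - / Rpower (sinh x / x) q).

Lemma is_derive_margin q x : 0 <= q -> 0 < x ->
  is_derive (margin q) x
    (q * (2 * Rpower (sinh x / x) q ^ 2 * sinh_cosh_gap x - cosh2_gap x)
     / (x * sinh x * cosh x * (2 * Rpower (sinh x / x) q ^ 2 - 1))).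
Proof.
  intros Hq Hx. assert (Hs := sinh_gt_id x Hx). assert (Hsx := sinc_gt_1 x Hx).
  assert (Hc := cosh_ge_1 x). assert (Hu := Rpower_sinc_ge_1 q x Hq Hx).
  assert (Hv : 0 < 2 * Rpower (sinh x / x) q - / Rpower (sinh x / x) q).
  { assert (/ Rpower (sinh x / x) q <= 1) by (rewrite <- Rinv_1; apply Rinv_le_contravar; lra).
    lra. }
  unfold margin, sinh_cosh_gap, cosh2_gap. unfold Rpower in *. auto_derive.
  - repeat split; lra.
  - set (u := exp (q * ln (sinh x / x))) in *. change (exp (q * ln (sinh x * / x))) with u.
    clearbody u. hyperbolic_field.
Qed.

Lemma Rpower_sinc_sqr q x : Rpower (sinh x / x) q ^ 2 = exp (2 * q * lnsinc x).
Proof. unfold Rpower, lnsinc. simpl. rewrite Rmult_1_r, <- exp_plus. f_equal. ring. Qed.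

Lemma margin_pos q x : 3 / 5 <= q -> 0 < x -> 0 < margin q x.
Proof.
  intros Hq Hx.
  eapply (pos_of_is_derive_pos (margin q) _ p_infty (3 * q) x);
    [lra | exact Hx | exact I | intros t Ht _ ..].
  - apply is_derive_margin; lra.
  - assert (Hu := Rpower_sinc_ge_1 q t ltac:(lra) Ht).
    assert (Hsq : exp (6 / 5 * lnsinc t) <= Rpower (sinh t / t) q ^ 2).
    { rewrite Rpower_sinc_sqr. apply exp_le_compat. generalize (lnsinc_pos t Ht). nra. }
    assert (HK := cosh2_gap_lt_exp_lnsinc t Ht). assert (H3 := sinh_cosh_gap_pos t Ht).
    assert (Hs := sinh_gt_id t Ht). assert (Hc := cosh_ge_1 t).
    cbv beta. set (u := Rpower (sinh t / t) q) in *.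
    assert (0 <= sinh_cosh_gap t * (u ^ 2 - exp (6 / 5 * lnsinc t))) by (apply Rmult_le_pos; lra).
    apply Rdiv_lt_0_compat; [apply Rmult_lt_0_compat; nra|].
    apply Rmult_lt_0_compat; [|nra]. apply Rmult_lt_0_compat; [|lra]. apply Rmult_lt_0_compat; lra.
  - assert (Hu := Rpower_sinc_ge_1 q t ltac:(lra) Ht).
    destruct (ln_two_sub_inv_bounds _ Hu) as [_ Hup].
    rewrite ln_Rpower in Hup. fold (lnsinc t) in Hup.
    assert (HL : 0 <= ln (cosh t)) by (rewrite <- ln_1; apply ln_le; [lra | apply cosh_ge_1]).
    generalize (lnsinc_lt t Ht). unfold margin. nra.
Qed.

Lemma Rpower_sinc_sqr_lt q t : 0 < q < 3 / 5 -> 0 < t -> t < (1 / 5 - q / 3) / 2 ->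
  Rpower (sinh t / t) q ^ 2 < 1 + t ^ 2 / 5 - t ^ 4.
Proof.
  intros Hq Ht Htd. rewrite Rpower_sinc_sqr.
  apply (Rle_lt_trans _ (exp (q / 3 * t ^ 2))).
  { apply exp_le_compat. generalize (lnsinc_lt_sqr t Ht). nra. }
  assert (Hsqr : t ^ 2 < (1 / 5 - q / 3) / 2) by nra.
  apply (Rle_lt_trans _ (/ (1 - q / 3 * t ^ 2))); [apply exp_le_inv_one_sub; nra|].
  replace (t ^ 4) with ((t ^ 2) ^ 2) by ring.
  apply inv_one_sub_lt; [lra | nra | lra].
Qed.

Lemma margin_neg q : 0 < q < 3 / 5 ->
  exists d, 0 < d /\ forall x, 0 < x < d -> margin q x < 0.
Proof.
  intros Hq. set (d := (1 / 5 - q / 3) / 2).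
  exists d. split; [unfold d; lra|]. intros x Hx.
  enough (H : 0 < - margin q x) by lra.
  eapply (pos_of_is_derive_pos (fun t => - margin q t) _ d q x);
    [lra | tauto | simpl; tauto | intros t Ht Htd ..]; simpl in Htd.
  - apply (@is_derive_opp R_AbsRing R_NormedModule (margin q)), is_derive_margin; lra.
  - cbv beta.
    assert (Hu := Rpower_sinc_ge_1 q t ltac:(lra) Ht).
    assert (Hsq := Rpower_sinc_sqr_lt q t Hq Ht Htd).
    assert (HP := cosh2_gap_gt_sharp t Ht). assert (H3 := sinh_cosh_gap_pos t Ht).
    assert (Hs := sinh_gt_id t Ht). assert (Hc := cosh_ge_1 t).
    set (u := Rpower (sinh t / t) q) in *.
    assert (0 <= sinh_cosh_gap t * (1 + t ^ 2 / 5 - t ^ 4 - u ^ 2)) by (apply Rmult_le_pos; lra).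
    assert (Hnum : q * (2 * u ^ 2 * sinh_cosh_gap t - cosh2_gap t) < 0).
    { assert (2 * u ^ 2 * sinh_cosh_gap t - cosh2_gap t < 0) by nra. nra. }
    assert (Hden : 0 < t * sinh t * cosh t * (2 * u ^ 2 - 1)).
    { apply Rmult_lt_0_compat; [|nra].
      apply Rmult_lt_0_compat; [|lra]. apply Rmult_lt_0_compat; lra. }
    assert (Hinv := Rinv_0_lt_compat _ Hden). unfold opp, Rdiv; cbn -[pow]. nra.
  - assert (Hu := Rpower_sinc_ge_1 q t ltac:(lra) Ht).
    destruct (ln_two_sub_inv_bounds _ Hu) as [Hlow _].
    generalize (ln_le_sub_1 (cosh t) ltac:(generalize (cosh_ge_1 t); lra)). unfold margin. nra.
Qed.

Lemma ln_tanh_div x : 0 < x -> ln (tanh x / x) = lnsinc x - ln (cosh x).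
Proof.
  intro Hx. assert (Hsx := sinc_gt_1 x Hx). assert (Hc := cosh_ge_1 x).
  unfold lnsinc. rewrite <- ln_div by lra. f_equal. unfold tanh. field. lra.
Qed.

Lemma Rpower_sum_gt_2_of_pos p x : 0 < p -> 0 < x ->
  Rpower (sinh x / x) (2 * p) + Rpower (tanh x / x) p > 2.
Proof.
  intros Hp Hx. unfold Rpower. rewrite ln_tanh_div by exact Hx. fold (lnsinc x).
  assert (H3 := ln_cosh_lt_3_lnsinc x Hx).
  set (a := lnsinc x) in *. set (L := ln (cosh x)) in *.
  set (A := exp (p * a)). set (B := exp (p * (a - L) / 2)).
  assert (HA : exp (2 * p * a) = A ^ 2)
    by (unfold A; simpl; rewrite Rmult_1_r, <- exp_plus; f_equal; ring).
  assert (HB : exp (p * (a - L)) = B ^ 2)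
    by (unfold B; simpl; rewrite Rmult_1_r, <- exp_plus; f_equal; field).
  assert (HAB : 1 < A * B).
  { unfold A, B. rewrite <- exp_plus, <- exp_0. apply exp_increasing. nra. }
  rewrite HA, HB. generalize (pow2_ge_0 (A - B)). nra.
Qed.

Lemma Rpower_sum_gt_2_iff_margin_pos q x : 0 < q -> 0 < x ->
  Rpower (sinh x / x) (2 * - q) + Rpower (tanh x / x) (- q) > 2 <-> 0 < margin q x.
Proof.
  intros Hq Hx. assert (Hu := Rpower_sinc_ge_1 q x ltac:(lra) Hx).
  assert (Hc := cosh_ge_1 x).
  assert (HC : 0 < Rpower (cosh x) q) by apply exp_pos.
  assert (Hsum : Rpower (sinh x / x) (2 * - q) + Rpower (tanh x / x) (- q)
                 = / Rpower (sinh x / x) q ^ 2 + Rpower (cosh x) q / Rpower (sinh x / x) q).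
  { unfold Rpower. rewrite ln_tanh_div by exact Hx. unfold lnsinc.
    simpl. rewrite Rmult_1_r, <- !exp_plus, <- exp_Ropp.
    unfold Rdiv. rewrite <- exp_Ropp, <- exp_plus.
    f_equal; f_equal; ring. }
  assert (Hmargin : margin q x = ln (Rpower (cosh x) q)
                                 - ln (2 * Rpower (sinh x / x) q - / Rpower (sinh x / x) q)).
  { unfold margin. now rewrite ln_Rpower. }
  rewrite Hsum, Hmargin.
  set (u := Rpower (sinh x / x) q) in *. set (C := Rpower (cosh x) q) in *.
  assert (Hinv : / u <= 1) by (rewrite <- Rinv_1; apply Rinv_le_contravar; lra).
  assert (Hiff : / u ^ 2 + C / u > 2 <-> 2 * u - / u < C).
  { replace (/ u ^ 2 + C / u) with ((C - (2 * u - / u)) / u + 2) by (field; lra).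
    split; intro H.
    - assert (Hpos : 0 < (C - (2 * u - / u)) / u) by lra.
      apply (Rmult_lt_compat_r u) in Hpos; [|lra]. unfold Rdiv in Hpos.
      rewrite Rmult_assoc, Rinv_l, Rmult_0_l in Hpos by lra. lra.
    - assert (0 < (C - (2 * u - / u)) / u) by (apply Rdiv_lt_0_compat; lra). lra. }
  rewrite Hiff. split; intro H.
  - apply Rlt_0_minus, ln_increasing; lra.
  - apply ln_lt_inv; lra.
Qed.

Theorem proposition4p7 (p : R) (hp : p <> 0) :
  (forall x : R, 0 < x ->
     Rpower (sinh x / x) (2 * p) + Rpower (tanh x / x) p > 2)
  <-> (0 < p \/ p <= - (3 / 5)).
Proof.
  split.
  - intro Hall. destruct (Rlt_or_le 0 p) as [Hp|Hp]; [now left|].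
    destruct (Rle_or_lt p (- (3 / 5))) as [Hp'|Hp']; [now right|].
    exfalso. destruct (margin_neg (- p) ltac:(lra)) as [d [Hd Hneg]].
    specialize (Hall (d / 2) ltac:(lra)). replace p with (- - p) in Hall by ring.
    apply Rpower_sum_gt_2_iff_margin_pos in Hall; [|lra|lra].
    specialize (Hneg (d / 2) ltac:(lra)). lra.
  - intros [Hp|Hp] x Hx.
    + now apply Rpower_sum_gt_2_of_pos.
    + replace p with (- - p) by ring.
      apply Rpower_sum_gt_2_iff_margin_pos; [lra | exact Hx |].
      apply margin_pos; lra.
Qed.
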